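(* Let $G=(V,E,w)$ be a weighted undirected graph with $n$ vertices and positive edge weights, let $h,k$ be natural numbers, $\varepsilon>0$, and $c\ge1$ a constant. Let $S\subseteq V$ be obtained by including each vertex independently with probability $\min((c+2)\log n/h,1)$. Let $\tilde d(s,v)$, for $(s,v)\in S\times V$, be estimates satisfying $d(s,v)\le\tilde d(s,v)\le(1+\varepsilon)d^{2h}(s,v)$ for all $(s,v)\in S\times V$. Let $H$ be the weighted graph on vertex set $S$ having an edge $\{s,s'\}$ whenever the estimated distance between $s$ and $s'$ is finite, with weight equal to that estimate, let $H'$ be any $(2k-1)$-spanner of $H$, and for $s\in S$, $v\in V$ define $d_{out}(s,v)=\min_{s'\in S}\big(d_{H'}(s,s')+\tilde d(s',v)\big)$. Then, with high probability (over the choice of $S$), $d(s,v)\le d_{out}(s,v)\le(2k-1)(1+\varepsilon)\,d(s,v)$ for all $(s,v)\in S\times V$.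
   Context: $d(s,v)$ is the weighted distance in $G$, and $d^{h}(s,v)$ is the $h$-hop distance, the minimum weight of an $s$–$v$ path with at most $h$ edges ($\infty$ if none). A $(2k-1)$-spanner of $H$ is a subgraph $H'$ on the same vertex set with $d_{H'}(x,y)\le(2k-1)d_H(x,y)$ for all $x,y$; $d_{H'}(s,s)=0$. Logarithms are base $2$. ''With high probability'' means with probability at least $1-n^{-c}$ (up to constant changes in the exponent). *)

From HB Require Import structures.
From mathcomp Require Import all_boot all_order all_algebra.
From mathcomp Require Import mathcomp_extra boolp classical_sets functions reals.
From mathcomp Require Import constructive_ereal ereal exp.
Set Implicit Arguments. Unset Strict Implicit. Unset Printing Implicit Defensive.
Import Order.TTheory GRing.Theory Num.Theory.

Local Open Scope classical_set_scope.
Local Open Scope ring_scope.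

Section Defs.
Variables (R : realType) (V : finType).

(* A weighted undirected graph on vertex type V is represented by its weight
   function W : V -> V -> \bar R: {a,b} is an edge iff W a b < +oo (and then
   W a b is its weight); +oo means "no edge". *)
Definition is_edge (W : V -> V -> \bar R) : rel V :=
  fun a b => (W a b < +oo)%E.

(* weight of the walk x :: p (it has size p edges) *)
Definition walk_weight (W : V -> V -> \bar R) (x : V) (p : seq V) : \bar R :=
  (\sum_(e <- zip (x :: p) p) W e.1 e.2)%E.

Definition walks (W : V -> V -> \bar R) (x y : V) : set (seq V) :=
  [set p | path (is_edge W) x p && (last x p == y)].

Definition dist (W : V -> V -> \bar R) (x y : V) : \bar R :=
  ereal_inf [set walk_weight W x p | p in walks W x y].

Definition hop_dist (W : V -> V -> \bar R) (h : nat) (x y : V) : \bar R :=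
  ereal_inf [set walk_weight W x p | p in
               [set p | p \in walks W x y /\ (size p <= h)%N]].

(* The graph H on vertex set S: edge {s,s'} (s <> s' in S) whenever the
   estimated distance between s and s' is finite, with weight that estimate
   (we take the better of the two estimates dt s s', dt s' s). *)
Definition Hgraph (S : {set V}) (dt : V -> V -> \bar R) : V -> V -> \bar R :=
  fun a b => if [&& a \in S, b \in S & a != b]
             then Order.min (dt a b) (dt b a) else +oo%E.

Definition is_spanner (t : R) (S : {set V}) (WH WH' : V -> V -> \bar R) : Prop :=
  [/\ (forall a b, WH' a b = WH a b \/ WH' a b = +oo%E),
      (forall a b, WH' a b = WH' b a) &
      (forall x y, x \in S -> y \in S -> (dist WH' x y <= t%:E * dist WH x y)%E)].

Definition dout (S : {set V}) (WH' : V -> V -> \bar R) (dt : V -> V -> \bar R)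
  (s v : V) : \bar R :=
  ereal_inf [set (dist WH' s s' + dt s' v)%E | s' in [set x | x \in S]].

Definition log2 (x : R) : R := ln x / ln 2.

Definition sample_prob (n h : nat) (c : R) : R :=
  Order.min ((c + 2) * log2 n%:R / h%:R) 1.

(* probability that the random set equals S when every vertex is included
   independently with probability p *)
Definition set_prob (p : R) (S : {set V}) : R :=
  (\prod_(v in S) p) * (\prod_(v in ~: S) (1 - p)).

End Defs.

From mathcomp Require Import all_boot all_order all_algebra.
From mathcomp Require Import boolp classical_sets reals.
From mathcomp Require Import constructive_ereal ereal sequences exp.
From mathcomp Require Import ring lra.
Import Order.TTheory GRing.Theory Num.Theory.
Set Implicit Arguments. Unset Strict Implicit. Unset Printing Implicit Defensive.

(* Fix, for every pair (u, v), a shortest u--v walk with the fewest hops.  If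
   such a walk has more than 2h hops, S misses its first h vertices with
   probability (1 - p)^h <= n^-(c+2), so by a union bound over the n^2 pairs S
   hits all of them with probability at least 1 - n^-c.  On that event, walking
   along the canonical walk from s in S and jumping to a sampled vertex at most
   h hops ahead, we reach a vertex s' of S from which v is within 2h hops; the
   jumps are edges of H of weight at most (1 + eps) times the walked distance,
   and the suffixes of canonical walks are shorter canonical walks.  Hence
   d_H(s, s') + dt(s', v) <= (1 + eps) d(s, v), and the spanner loses at most
   the factor 2k - 1 on the first term.  The lower bound d <= d_out holds
   because every edge of H' weighs at least the distance between its ends. *)

Section Walks.
Variables (R : realType) (V : finType).
Local Open Scope ereal_scope.
Implicit Types (W : V -> V -> \bar R) (x y z : V) (p q : seq V).

Lemma walk_weight0 W x : walk_weight W x [::] = 0.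
Proof. by rewrite /walk_weight big_nil. Qed.

Lemma walk_weight_cons W x y p :
  walk_weight W x (y :: p) = W x y + walk_weight W y p.
Proof. by rewrite /walk_weight /= big_cons. Qed.

Lemma walk_weight_cat W x p q :
  walk_weight W x (p ++ q) = walk_weight W x p + walk_weight W (last x p) q.
Proof.
elim: p x => [|y p IHp] x /=; first by rewrite walk_weight0 add0e.
by rewrite !walk_weight_cons IHp addeA.
Qed.
Lemma walksP W x y p : walks W x y p <-> path (is_edge W) x p /\ last x p = y.
Proof. by rewrite /walks /=; split=> [/andP[-> /eqP ->]|[-> ->]] //; rewrite eqxx. Qed.

Lemma walks_last W x y p : walks W x y p -> last x p = y.
Proof. by case/walksP. Qed.

Lemma walks_cat W x y z p q :
  walks W x y p -> walks W y z q -> walks W x z (p ++ q).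
Proof.
move=> /walksP[Wp <-] /walksP[Wq <-]; apply/walksP.
by rewrite cat_path last_cat Wp Wq.
Qed.

Lemma walks_rev W x y p : (forall a b, W a b = W b a) -> walks W x y p ->
  exists2 q, walks W y x q & walk_weight W y q = walk_weight W x p.
Proof.
move=> W_sym; elim: p x => [|z p IHp] x /walksP[/= Wp Lp].
  by exists [::] => //; apply/walksP; rewrite -Lp.
case/andP: Wp => Wxz Wp; have [|q Wq Eq] := IHp z; first by apply/walksP.
exists (q ++ [:: x]).
  by apply: walks_cat Wq _; apply/walksP; rewrite /= andbT /is_edge W_sym.
rewrite walk_weight_cat (walks_last Wq) Eq !walk_weight_cons walk_weight0 adde0 W_sym.
exact: addeC.
Qed.

Lemma walks_cat_inv W x z p q : walks W x z (p ++ q) ->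
  walks W x (last x p) p /\ walks W (last x p) z q.
Proof.
by case/walksP; rewrite cat_path last_cat => /andP[Wp Wq] Lq; split; apply/walksP.
Qed.

Definition shortest_walk W x y q :=
  [/\ walks W x y q, uniq (x :: q) & walk_weight W x q = dist W x y].

Lemma dist_le_walk W x y p : walks W x y p -> dist W x y <= walk_weight W x p.
Proof. by move=> Wp; apply: ereal_inf_lbound; exists p. Qed.

Lemma dist_le_edge W x y : dist W x y <= W x y.
Proof.
have [Wxy|] := ltP (W x y) +oo; last by rewrite leye_eq => /eqP ->; exact: leey.
have := @dist_le_walk W x y [:: y]; rewrite walk_weight_cons walk_weight0 adde0.
by apply; apply/walksP; rewrite /= andbT.
Qed.

Lemma hop_dist_le_walk W n x y p : walks W x y p -> (size p <= n)%N ->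
  hop_dist W n x y <= walk_weight W x p.
Proof.
by move=> Wp sz_p; apply: ereal_inf_lbound; exists p => //; split; rewrite ?in_setE.
Qed.

Lemma dist_nowalk W x y : ~ (exists p, walks W x y p) -> dist W x y = +oo.
Proof.
by move=> noW; apply/ereal_inf_pinfty => w [p Wp _]; exfalso; apply: noW; exists p.
Qed.

Lemma dist_sym W x y : (forall a b, W a b = W b a) -> dist W x y = dist W y x.
Proof.
move=> W_sym; suff le_dist a b : dist W b a <= dist W a b.
  by apply/le_anti; rewrite !le_dist.
apply: le_ereal_inf_tmp => _ [p Wp <-].
by have [q Wq <-] := walks_rev W_sym Wp; apply: dist_le_walk.
Qed.

Fixpoint short_seqs (n : nat) : seq (seq V) :=
  if n is n.+1 then [::] :: [seq x :: q | x <- enum V, q <- short_seqs n]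
  else [:: [::]].

Lemma mem_short_seqs n p : (size p <= n)%N -> p \in short_seqs n.
Proof.
elim: n p => [|n IHn] [|x p] //= sz_p; rewrite in_cons /=.
by apply: (allpairs_f (fun x q => x :: q)); rewrite ?mem_enum ?IHn.
Qed.

Section NonNegative.
Variable W : V -> V -> \bar R.
Hypothesis W_ge0 : forall a b, 0 <= W a b.

Lemma walk_weight_ge0 x p : 0 <= walk_weight W x p.
Proof. by apply: sume_ge0 => e _. Qed.

Lemma walk_weight_fin_num x y p : walks W x y p ->
  walk_weight W x p \is a fin_num.
Proof.
case/walksP=> + _; rewrite ge0_fin_numE ?walk_weight_ge0 //.
elim: p x => [|z p IHp] x /=; first by rewrite walk_weight0 ltey.
by case/andP=> Wxz /IHp Wp; rewrite walk_weight_cons lte_add_pinfty.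
Qed.

Lemma dist_ge0 x y : 0 <= dist W x y.
Proof. by apply: le_ereal_inf_tmp => _ [p _ <-]; apply: walk_weight_ge0. Qed.

Lemma dist_xx x : dist W x x = 0.
Proof.
apply/le_anti; rewrite dist_ge0 andbT.
by rewrite -(walk_weight0 W x) dist_le_walk //; apply/walksP.
Qed.

Lemma shorten_walk x p : path (is_edge W) x p ->
  exists q, [/\ path (is_edge W) x q, last x q = last x p, uniq (x :: q),
    {subset q <= p} & walk_weight W x q <= walk_weight W x p].
Proof.
have [n] := ubnP (size p); elim: n p x => // n IHn p x.
have [xp|xNp] := boolP (x \in p).
  case/splitPr: xp => p1 p2; rewrite size_cat /= addnS ltnS => sz_p.
  rewrite cat_path => /andP[_ /= /andP[_ Wp2]].
  have [|q [Wq Lq Uq sub_q le_q]] := IHn p2 x _ Wp2.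
    by rewrite (leq_ltn_trans _ sz_p) // leq_addl.
  exists q; split=> //; first by rewrite Lq last_cat.
    by move=> z /sub_q z_p2; rewrite mem_cat in_cons z_p2 !orbT.
  rewrite walk_weight_cat walk_weight_cons addeA (le_trans le_q) // leeDr //.
  by rewrite adde_ge0 ?walk_weight_ge0.
case: p xNp => [|y p] xNp sz_p; first by exists [::].
case/andP=> Wxy Wp; have [q [Wq Lq Uq sub_q le_q]] := IHn p y sz_p Wp.
exists (y :: q); split=> //; first by rewrite /= Wxy.
- rewrite cons_uniq Uq andbT in_cons negb_or; apply/andP; split.
    by apply: contraNneq xNp => ->; rewrite mem_head.
  by apply: contra xNp => /sub_q y_p; rewrite in_cons y_p orbT.
- by move=> z; rewrite !in_cons => /orP[->|/sub_q ->]; rewrite ?orbT.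
- by rewrite !walk_weight_cons leeD2l.
Qed.

Lemma shortest_walk_exists x y : (exists p, walks W x y p) ->
  exists q, shortest_walk W x y q.
Proof.
(* Simple walks have fewer than #|V| hops, so a lightest one exists among the
   finitely many sequences of short_seqs #|V|, and shortening shows it is optimal. *)
move=> [p Wp].
pose simple q := `[< walks W x y q /\ uniq (x :: q) >].
have shorten q : walks W x y q ->
    exists2 q', simple q' & walk_weight W x q' <= walk_weight W x q.
  case/walksP=> Wq Lq; have [q' [Wq' Lq' Uq' _ le_q']] := shorten_walk Wq.
  by exists q' => //; apply/asboolP; split=> //; apply/walksP; rewrite Lq'.
have short q : simple q -> q \in short_seqs #|V|.
  case/asboolP=> _ /card_uniqP /= card_xq; apply: mem_short_seqs.
  by apply: ltnW; rewrite -card_xq max_card.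
have [q0 simple_q0 _] := shorten p Wp.
have [i /asboolP[Wi Ui] min_i] := arg_minP (fun i : seq_sub (short_seqs #|V|) =>
  walk_weight W x (val i)) (P := fun i => simple (val i))
  (i0 := SeqSub (short q0 simple_q0)) simple_q0.
exists (val i); split=> //; apply/le_anti; rewrite dist_le_walk // andbT.
apply: le_ereal_inf_tmp => _ [q Wq <-]; have [q' simple_q' le_q'] := shorten q Wq.
exact: le_trans (min_i (SeqSub (short q' simple_q')) simple_q') le_q'.
Qed.

Lemma dist_triangle x y z : dist W x z <= dist W x y + dist W y z.
Proof.
have dist_neqNy a b : dist W a b != -oo.
  by rewrite gt_eqF // (lt_le_trans _ (dist_ge0 a b)) ?ltNy0.
have [[p Wp]|noWxy] := pselect (exists p, walks W x y p); last first.
  by rewrite (dist_nowalk noWxy) addye ?leey.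
have [[q Wq]|noWyz] := pselect (exists q, walks W y z q); last first.
  by rewrite (dist_nowalk noWyz) addey ?leey.
have [p' [Wp' _ <-]] := shortest_walk_exists (ex_intro _ p Wp).
have [q' [Wq' _ <-]] := shortest_walk_exists (ex_intro _ q Wq).
apply: le_trans (dist_le_walk (walks_cat Wp' Wq')) _.
by rewrite walk_weight_cat (walks_last Wp').
Qed.

Lemma dist_le_dist W' x y :
    (forall a b, is_edge W' a b -> dist W a b <= W' a b) ->
  dist W x y <= dist W' x y.
Proof.
move=> le_W'; apply: le_ereal_inf_tmp => _ [p /walksP[W'p <-] <-].
elim: p x W'p => [|z p IHp] x /=; first by rewrite dist_xx walk_weight0.
case/andP=> W'xz W'p; rewrite walk_weight_cons.
by apply: le_trans (dist_triangle x z _) _; apply: leeD; [apply: le_W' | apply: IHp].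
Qed.

End NonNegative.

End Walks.

Section UnionBound.
Variables (R : numDomainType) (T I : finType) (P : T -> R).
Local Open Scope ring_scope.

Lemma union_bound (good : pred T) (bad : I -> pred T) :
  (forall t, 0 <= P t) -> \sum_t P t = 1 ->
  (forall t, ~~ good t -> exists i, bad i t) ->
  1 - \sum_i \sum_(t | bad i t) P t <= \sum_(t | good t) P t.
Proof.
move=> P_ge0 P_sum1 bad_cover.
rewrite -P_sum1 (bigID good predT) /= -addrA gerDl subr_le0.
pose Q t := \sum_i (if bad i t then P t else 0).
have Q_ge0 t : 0 <= Q t by apply: sumr_ge0 => i _; case: ifP.
apply: (@le_trans _ _ (\sum_(t | ~~ good t) Q t)).
  apply: ler_sum => t /bad_cover[i bad_it].
  by rewrite /Q (bigD1 i) //= bad_it lerDl sumr_ge0 // => j _; case: ifP.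
apply: (@le_trans _ _ (\sum_t Q t)).
  by rewrite [leRHS](bigID (fun t => ~~ good t)) /= lerDl sumr_ge0.
by rewrite /Q exchange_big; apply: ler_sum => i _; rewrite [leRHS]big_mkcond.
Qed.

End UnionBound.

Section SetProb.
Variables (R : realType) (V : finType).
Local Open Scope ring_scope.
Implicit Types (p : R) (S : {set V}).

Lemma set_probE p S : set_prob p S = \prod_v (if v \in S then p else 1 - p).
Proof.
rewrite /set_prob [RHS](bigID (mem S)) /=; congr (_ * _); apply: eq_big => v //.
- by move=> ->.
- by rewrite !inE.
- by rewrite !inE => /negbTE ->.
Qed.

Lemma set_prob_ge0 p S : 0 <= p <= 1 -> 0 <= set_prob p S.
Proof.
case/andP=> p_ge0 p_le1; rewrite set_probE; apply: prodr_ge0 => v _.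
by case: ifP; rewrite ?subr_ge0.
Qed.

Lemma sum_set_prob p : \sum_(S : {set V}) set_prob p S = 1.
Proof.
under eq_bigr do rewrite set_probE.
by rewrite -bigA_distr big1 // => v _ /=; rewrite addrCA subrr addr0.
Qed.

Lemma sum_set_prob_disjoint p (A : seq V) : uniq A ->
  \sum_(S : {set V} | [disjoint A & S]) set_prob p S = (1 - p) ^+ size A.
Proof.
move=> A_uniq; rewrite -(card_uniqP A_uniq) -prodr_const big_mkcond /=.
transitivity (\sum_(S : {set V}) \prod_v
    (if v \in S then (if v \in A then 0 else p) else 1 - p)).
  apply: eq_bigr => S _; rewrite set_probE; case: ifPn => [AS|].
    apply: eq_bigr => v _; case: ifP => // vS; case: ifP => // vA.
    by rewrite (disjointFr AS vA) in vS.
  rewrite disjoint_has negbK => /hasP[v vA vS].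
  by rewrite (bigD1 v) //= vS vA mul0r.
rewrite -bigA_distr [RHS]big_mkcond; apply: eq_bigr => v _.
by case: ifP => _ /=; rewrite ?add0r // addrCA subrr addr0.
Qed.

End SetProb.

Section SampleProb.
Variable R : realType.
Local Open Scope ring_scope.

Lemma ln2_gt0 : 0 < ln (2 : R).
Proof. by rewrite ln_gt0 // ltr1n. Qed.

Lemma ln2_le1 : ln (2 : R) <= 1.
Proof. by rewrite -[2]/(1 + 1 : R) le_ln1Dx. Qed.

Lemma log2_nat_ge0 (n : nat) : 0 <= log2 (n%:R : R).
Proof.
apply: divr_ge0; last exact: ltW ln2_gt0.
by case: n => [|n]; [rewrite ln0 | apply: ln_ge0; rewrite ler1n].
Qed.

Lemma sample_prob_itv (n h : nat) (c : R) : -2 <= c ->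
  0 <= sample_prob n h c <= 1.
Proof.
move=> c_ge; rewrite /sample_prob ge_min lexx orbT andbT le_min ler01 andbT.
by rewrite divr_ge0 // mulr_ge0 ?log2_nat_ge0 // -lerBlDr sub0r.
Qed.

Lemma sample_miss_prob_le (n h : nat) (c : R) : (0 < h)%N -> -2 <= c ->
  n%:R ^+ 2 * (1 - sample_prob n h c) ^+ h <= powR n%:R (- c).
Proof.
move=> h_gt0 c_ge; case: n => [|n]; first by rewrite expr0n mul0r powR_ge0.
set N : R := n.+1%:R; have N_gt0 : 0 < N by rewrite ltr0n.
have lnN_ge0 : 0 <= ln N by rewrite ln_ge0 // ler1n.
have c2_ge0 : 0 <= c + 2 by rewrite -lerBlDr sub0r.
rewrite /sample_prob; set x := _ / _.
have x_ge0 : 0 <= x by rewrite divr_ge0 // mulr_ge0 ?log2_nat_ge0.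
have [x_ge1|x_lt1] := leP 1 x.
  by rewrite subrr expr0n gtn_eqF // mulr0 powR_ge0.
(* (1 - x)^h <= exp(-x h) = N^-((c + 2) / ln 2) <= N^-(c + 2) *)
have -> : powR N (- c) = N ^+ 2 * expR (- ((c + 2) * ln N)).
  have -> : N ^+ 2 = expR (2 * ln N) by rewrite expRM_natl lnK ?posrE.
  by rewrite /powR gt_eqF // -expRD; congr expR; ring.
apply: ler_wpM2l; first by rewrite exprn_ge0 // ltW.
apply: (@le_trans _ _ (expR (- x) ^+ h)).
  by rewrite lerXn2r ?nnegrE ?expR_ge0 ?subr_ge0 ?(ltW x_lt1) ?expR_ge1Dx.
have hx : h%:R * x = (c + 2) * ln N / ln 2.
  by rewrite mulrC divfK ?pnatr_eq0 -?lt0n // /log2 mulrA.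
rewrite -expRM_natl ler_expR mulrN hx lerN2 ler_pdivlMr ?ln2_gt0 //.
by rewrite ler_piMr ?mulr_ge0 ?ln2_le1.
Qed.
End SampleProb.

Section CanonicalWalks.
Variables (R : realType) (V : finType) (W : V -> V -> \bar R).
Hypothesis W_ge0 : forall a b, (0 <= W a b)%E.
Local Open Scope ring_scope.
Implicit Types (u v : V) (q : seq V) (S : {set V}).

Definition min_hop_shortest_walk u v q :=
  shortest_walk W u v q /\
  forall q', shortest_walk W u v q' -> (size q <= size q')%N.

Definition canonical_walk u v : seq V :=
  if pselect (exists q, min_hop_shortest_walk u v q) is left ex
  then projT1 (cid ex) else [::].

Lemma canonical_walkP u v : (exists p, walks W u v p) ->
  min_hop_shortest_walk u v (canonical_walk u v).
Proof.
move=> /(shortest_walk_exists W_ge0)[q0 short_q0].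
pose P m := `[< exists2 q, shortest_walk W u v q & size q = m >].
have [|m /asboolP[q short_q <-] min_q] := ex_minnP (ex_intro P (size q0) _).
  by apply/asboolP; exists q0.
rewrite /canonical_walk; case: pselect => [ex|[]]; first exact: projT2 (cid ex).
by exists q; split=> // q' short_q'; apply: min_q; apply/asboolP; exists q'.
Qed.

Lemma canonical_walk_uniq u v : uniq (canonical_walk u v).
Proof.
rewrite /canonical_walk; case: pselect => // ex.
by case: (projT2 (cid ex)) => -[_ /andP[]].
Qed.

Definition misses (h : nat) u v S : bool :=
  (2 * h < size (canonical_walk u v))%N &&
  [disjoint take h (canonical_walk u v) & S].

Definition hits_all (h : nat) S : bool :=
  [forall uv : V * V, ~~ misses h uv.1 uv.2 S].

Lemma canonical_walk_split h S u v : hits_all h S ->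
    (exists p, walks W u v p) -> (2 * h < size (canonical_walk u v))%N ->
  exists s1 pre, [/\ s1 \in S, walks W u s1 pre, (size pre <= h)%N,
    (walk_weight W u pre + dist W s1 v = dist W u v)%E &
    (size (canonical_walk s1 v) < size (canonical_walk u v))%N].
Proof.
move=> hitS ex_uv long; have [[Wq Uq Eq] min_q] := canonical_walkP ex_uv.
set q := canonical_walk u v in long Wq Uq Eq min_q *.
have /hasP[s1 s1_take s1S] : has (mem S) (take h q).
  by move/forallP: hitS => /(_ (u, v)); rewrite /misses -/q long disjoint_has negbK.
have [pre [p2 [q_eq pre_le pre_last U2]]] : exists pre p2,
    [/\ q = pre ++ p2, (0 < size pre <= h)%N, last u pre = s1 & uniq (s1 :: p2)].
  case/splitPr: s1_take (cat_take_drop h q) (size_take_min h q) => t1 t2.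
  rewrite -catA /= => q_eq sz; exists (rcons t1 s1), (t2 ++ drop h q).
  rewrite cat_rcons size_rcons last_rcons; split=> //.
    apply: leq_trans (geq_minl h (size q)).
    by rewrite -sz size_cat /= addnS ltnS leq_addr.
  by rewrite -q_eq cons_uniq cat_uniq in Uq; case/andP: Uq => _ /and3P[].
have [Wpre Wp2] : walks W u s1 pre /\ walks W s1 v p2.
  by move: Wq; rewrite q_eq => /walks_cat_inv; rewrite pre_last.
have pre_fin := walk_weight_fin_num W_ge0 Wpre.
have Eq2 : (walk_weight W u pre + walk_weight W s1 p2 = dist W u v)%E.
  by rewrite -Eq q_eq walk_weight_cat pre_last.
have p2_short : walk_weight W s1 p2 = dist W s1 v.
  apply/le_anti; rewrite dist_le_walk // andbT -(leeD2lE _ _ pre_fin) Eq2.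
  exact: le_trans (dist_triangle W_ge0 u s1 v) (leeD2r _ (dist_le_walk Wpre)).
exists s1, pre; split; rewrite -?p2_short //; first by case/andP: pre_le.
have [_ min_q1] := canonical_walkP (ex_intro _ p2 Wp2).
apply: leq_ltn_trans (min_q1 p2 _) _; first by split.
by rewrite q_eq size_cat -{1}[size p2]add0n ltn_add2r; case/andP: pre_le.
Qed.

Section Estimates.
Variables (S : {set V}) (dt : V -> V -> \bar R).
Hypothesis dt_ge_dist : forall s v, s \in S -> (dist W s v <= dt s v)%E.
Local Open Scope ereal_scope.

Lemma dt_ge0 s v : s \in S -> 0 <= dt s v.
Proof. by move=> sS; apply: le_trans (dt_ge_dist v sS); apply: dist_ge0. Qed.

Lemma Hgraph_ge0 a b : 0 <= Hgraph S dt a b.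
Proof. by rewrite /Hgraph; case: ifP => // /and3P[aS bS _]; rewrite le_min !dt_ge0. Qed.

Lemma dist_Hgraph_le a b : a \in S -> b \in S -> dist (Hgraph S dt) a b <= dt a b.
Proof.
move=> aS bS; have [<-|ab] := eqVneq a b; first by rewrite (dist_xx Hgraph_ge0) dt_ge0.
by apply: le_trans (dist_le_edge _ _ _) _; rewrite /Hgraph aS bS ab ge_min lexx.
Qed.

Lemma Hgraph_route_le h (eps : R) : (0 <= eps)%R -> hits_all h S ->
    (forall s v, s \in S -> dt s v <= (1 + eps)%:E * hop_dist W (2 * h) s v) ->
  forall s v, s \in S -> exists2 s', s' \in S &
    dist (Hgraph S dt) s s' + dt s' v <= (1 + eps)%:E * dist W s v.
Proof.
move=> eps_ge0 hitS dt_le s v; have [m] := ubnP (size (canonical_walk s v)).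
elim: m s => // m IHm s sz_m sS.
have e_ge0 : 0 <= (1 + eps)%:E by rewrite lee_fin addr_ge0.
have [ex_sv|no_sv] := pselect (exists p, walks W s v p); last first.
  by exists s; rewrite // (dist_nowalk no_sv) gt0_muley ?leey // lte_fin ltr_pwDl.
have [[Wq _ Eq] _] := canonical_walkP ex_sv.
have [short|long] := leqP (size (canonical_walk s v)) (2 * h).
  exists s; rewrite // (dist_xx Hgraph_ge0) add0e (le_trans (dt_le s v sS)) //.
  by rewrite lee_wpmul2l // -Eq hop_dist_le_walk.
have [s1 [pre [s1S Wpre pre_le <- lt_s1]]] := canonical_walk_split hitS ex_sv long.
have [s' s'S le_s'] := IHm s1 (leq_trans lt_s1 sz_m) s1S.
exists s' => //; rewrite ge0_muleDr ?(walk_weight_ge0 W_ge0) ?(dist_ge0 W_ge0) //.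
apply: le_trans (leeD2r _ (dist_triangle Hgraph_ge0 s s1 s')) _.
rewrite -addeA leeD //; apply: le_trans (dist_Hgraph_le sS s1S) _.
apply: le_trans (dt_le s s1 sS) _; rewrite lee_wpmul2l // hop_dist_le_walk //.
by apply: leq_trans pre_le _; rewrite leq_pmull.
Qed.

Lemma dist_le_dout (WH' : V -> V -> \bar R) s v :
    (forall a b, W a b = W b a) ->
    (forall a b, WH' a b = Hgraph S dt a b \/ WH' a b = +oo) ->
  dist W s v <= dout S WH' dt s v.
Proof.
move=> W_sym sub_H'; apply: le_ereal_inf_tmp => _ [s' s'S <-].
apply: le_trans (dist_triangle W_ge0 s s' v) _; apply: leeD; last exact: dt_ge_dist.
apply: dist_le_dist => // a b; rewrite /is_edge.
case: (sub_H' a b) => ->; last by rewrite ltxx.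
rewrite /Hgraph; case: ifP => [/and3P[aS bS _] _|_ _]; last exact: leey.
by rewrite le_min dt_ge_dist //= dist_sym // dt_ge_dist.
Qed.

Lemma dout_le_stretch h (t eps : R) (WH' : V -> V -> \bar R) s v :
    (1 <= t)%R -> (0 <= eps)%R -> hits_all h S ->
    (forall s v, s \in S -> dt s v <= (1 + eps)%:E * hop_dist W (2 * h) s v) ->
    (forall x y, x \in S -> y \in S ->
       dist WH' x y <= t%:E * dist (Hgraph S dt) x y) ->
  s \in S -> dout S WH' dt s v <= (t * (1 + eps))%:E * dist W s v.
Proof.
move=> t_ge1 eps_ge0 hitS dt_le stretch sS.
have [s' s'S route] := Hgraph_route_le eps_ge0 hitS dt_le v sS.
apply: le_trans (ereal_inf_lbound _) _; first by exists s'.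
have t_ge0 : 0 <= t%:E by rewrite lee_fin (le_trans ler01).
rewrite EFinM -muleA; apply: le_trans (lee_wpmul2l t_ge0 route).
rewrite ge0_muleDr ?(dist_ge0 Hgraph_ge0) ?dt_ge0 //.
by apply: leeD; [exact: stretch | rewrite lee_pemull ?dt_ge0 ?lee_fin].
Qed.

End Estimates.

Lemma misses_prob_le h u v (p : R) : 0 <= p <= 1 ->
  \sum_(S | misses h u v S) set_prob p S <= (1 - p) ^+ h.
Proof.
case/andP=> _ p_le1; rewrite /misses; case: ltnP => [long|_] /=.
  rewrite sum_set_prob_disjoint ?take_uniq ?canonical_walk_uniq // size_takel //.
  by apply: leq_trans (ltnW long); rewrite leq_pmull.
by rewrite big_pred0 // exprn_ge0 // subr_ge0.
Qed.

Lemma hits_all_prob h (p : R) : 0 <= p <= 1 ->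
  1 - #|V|%:R ^+ 2 * (1 - p) ^+ h <= \sum_(S | hits_all h S) set_prob p S.
Proof.
move=> p_itv.
have cover S : ~~ hits_all h S -> exists uv : V * V, misses h uv.1 uv.2 S.
  by move=> /forallPn[uv]; rewrite negbK; exists uv.
apply: le_trans _ (union_bound (fun S => set_prob_ge0 S p_itv) (sum_set_prob V p) cover).
rewrite lerD2l lerN2.
apply: le_trans (ler_sum _ (fun uv _ => misses_prob_le h uv.1 uv.2 p_itv)) _.
by rewrite sumr_const card_prod -[_ *+ _]mulr_natl natrM expr2.
Qed.

End CanonicalWalks.

Local Open Scope ring_scope.

Theorem mainTheorem11 (R : realType) (V : finType) (W : V -> V -> \bar R)
  (h k : nat) (eps c : R) :
  (forall a b, W a b = W b a) ->
  (forall a b, (0 < W a b)%E) ->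
  (1 <= h)%N -> (1 <= k)%N -> 0 < eps -> 1 <= c ->
  exists good : pred {set V},
    (forall S : {set V}, good S ->
       forall dt : V -> V -> \bar R,
         (forall s v, s \in S ->
            (dist W s v <= dt s v)%E /\
            (dt s v <= (1 + eps)%:E * hop_dist W (2 * h) s v)%E) ->
         forall WH' : V -> V -> \bar R,
           is_spanner (2 * k%:R - 1) S (Hgraph S dt) WH' ->
           forall s v, s \in S ->
             (dist W s v <= dout S WH' dt s v)%E /\
             (dout S WH' dt s v <= ((2 * k%:R - 1) * (1 + eps))%:E * dist W s v)%E)
    /\ 1 - powR (#|V|%:R) (- c)
         <= \sum_(S : {set V} | good S) set_prob (sample_prob #|V| h c) S.
Proof.
move=> W_sym W_gt0 h_gt0 k_gt0 eps_gt0 c_ge1.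
have W_ge0 a b : (0 <= W a b)%E by apply: ltW.
exists (hits_all W h); split.
  move=> S hitS dt dt_bounds WH' [sub_H' _ stretch] s v sS.
  have dt_ge_dist s' v' s'S := (dt_bounds s' v' s'S).1.
  split; first exact: dist_le_dout.
  apply: (dout_le_stretch W_ge0 dt_ge_dist) (ltW eps_gt0) hitS _ stretch sS.
  - have k_ge1 : 1 <= k%:R :> R by rewrite ler1n.
    lra.
  - by move=> s' v' s'S; case: (dt_bounds s' v' s'S).
have p_itv : 0 <= sample_prob #|V| h c <= 1 by apply: sample_prob_itv; lra.
apply: le_trans _ (hits_all_prob W h p_itv); rewrite lerD2l lerN2.
by apply: sample_miss_prob_le => //; lra.
Qed.
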